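(* Let $G=\mathrm{SL}_2(q)$ with $q$ a prime power. If $q$ is even, then every subgroup of $G$ is a perfect code of $G$. If $q$ is odd, then a subgroup $H$ of $G$ is a perfect code of $G$ if and only if either $|H|_2=1$ or $|H|_2=|G|_2$.
   Context: $|X|_2$ denotes the largest power of $2$ dividing $|X|$. For a group $G$ with identity $e$ and an inverse-closed subset $S\subseteq G\setminus\{e\}$, the Cayley graph $\mathrm{Cay}(G,S)$ has vertex set $G$ and edges $\{g,sg\}$ for $s\in S$, $g\in G$. A perfect code in a graph is an independent set $C$ of vertices such that every vertex outside $C$ is adjacent to exactly one vertex of $C$. A subgroup $H$ of $G$ is a perfect code of $G$ if some Cayley graph of $G$ admits $H$ as a perfect code. *)

From mathcomp Require Import all_boot all_order all_algebra all_fingroup.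
Set Implicit Arguments. Unset Strict Implicit. Unset Printing Implicit Defensive.
Local Open Scope group_scope.

(* Perfect codes in Cayley graphs.  Cay(G,S) has vertex set G and edges
   {g, s g} (s in S); so x and y are adjacent iff y * x^-1 \in S
   (symmetric as S is inverse-closed). *)
Definition cayley_adj (gT : finGroupType) (S : {set gT}) (x y : gT) : bool :=
  y * x^-1 \in S.

Definition is_perfect_code_cay (gT : finGroupType) (G S C : {set gT}) : Prop :=
  [/\ C \subset G,
      {in C &, forall x y, ~~ cayley_adj S x y} &
      {in G :\: C, forall x, #|[set c in C | cayley_adj S x c]| = 1%N}].

Definition connection_set (gT : finGroupType) (G S : {set gT}) : Prop :=
  S \subset G :\ 1 /\ {in S, forall s, s^-1 \in S}.

Definition perfect_code_of (gT : finGroupType) (G H : {set gT}) : Prop :=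
  exists S : {set gT}, connection_set G S /\ is_perfect_code_cay G S H.

Definition SL2 (F : finFieldType) : {set {'GL_2[F]}} :=
  [set g : {'GL_2[F]} | (\det (GLval g) == 1)%R].

From mathcomp Require Import all_boot all_order all_algebra all_fingroup.
From mathcomp Require Import all_solvable all_field.
Set Implicit Arguments. Unset Strict Implicit. Unset Printing Implicit Defensive.

Import GRing.Theory.
Local Open Scope group_scope.

(* A subgroup H is a perfect code exactly when some
   inverse-closed set S meets every right coset of H other than H in exactly
   one element.  Such an S is built greedily from the cosets: a coset is either
   fixed by an involution lying in it, or paired with a coset Hw in the inverse
   double coset by an element g of Hc with g^-1 in Hw.  The pairing can always
   continue when the following holds: for every u with u^2 in H, either Hu
   contains an involution or the number |H : H :&: H^u| of cosets in HuH is
   even.  If q is even, every 2-element of SL_2(q) is an involution, so the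
   condition holds for every H.  If q is odd and |H| is odd, the condition holds
   because u^2 in H forces the 2-part of u to square to 1.  It also holds
   when H contains a Sylow 2-subgroup: if |H : H :&: H^u| were odd, then
   adjoining u to H :&: H^u would double a subgroup whose 2-part is already
   that of G.  Conversely, if |H| is even then H contains -1, the only
   involution of SL_2(q).  Then S contains no involutions, so |S| = |G : H| - 1
   is even. *)

Section DoubleCosets.

Variables (gT : finGroupType) (H : {group gT}).
Implicit Types x y : gT.

Definition dcoset x : {set gT} := H :* x * H.

Lemma dcosetP x y :
  reflect (exists a b, [/\ a \in H, b \in H & y = a * x * b]) (y \in dcoset x).
Proof.
apply: (iffP mulsgP) => [[u b /rcosetP[a Ha ->] Hb ->] | [a [b [Ha Hb ->]]]].
  by exists a, b.
by exists (a * x) b => //; apply/rcosetP; exists a.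
Qed.

Lemma dcoset_refl x : x \in dcoset x.
Proof. by apply/dcosetP; exists 1, 1; rewrite group1 mulg1 mul1g. Qed.

Lemma dcoset_id x : x \in H -> dcoset x = H.
Proof. by move=> Hx; rewrite /dcoset rcoset_id // mulGid. Qed.

Lemma dcoset_eqP x y : reflect (dcoset x = dcoset y) (x \in dcoset y).
Proof.
apply: (iffP idP) => [/dcosetP[a [b [Ha Hb ->]]] | <-]; last exact: dcoset_refl.
by rewrite /dcoset !rcosetM (rcoset_id Ha) -mulgA lcoset_id.
Qed.

Lemma dcosetV x : dcoset x^-1 = (dcoset x)^-1.
Proof. by rewrite /dcoset !invMg invGid invg_set1 mulgA. Qed.

Lemma mem_dcoset x y : (x \in dcoset y) = (dcoset x == dcoset y).
Proof. exact/dcoset_eqP/eqP. Qed.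

Lemma mem_dcosetV x y : (x \in dcoset y^-1) = (x^-1 \in dcoset y).
Proof. by rewrite dcosetV inE. Qed.

Lemma rcoset_sub_dcoset x c : (H :* c \subset dcoset x) = (c \in dcoset x).
Proof.
apply/subsetP/idP => [-> // | /dcoset_eqP <- y]; first exact: rcoset_refl.
case/rcosetP=> a Ha ->; apply/dcosetP; exists a, 1.
by rewrite group1 mulg1.
Qed.

Lemma card_dcoset x : #|dcoset x| = (#|H| * #|H : H :&: H :^ x|)%N.
Proof.
have -> : dcoset x = x *: (H :^ x * H).
  by rewrite mulgA conjsgE -lcosetM mulgV lcoset1.
rewrite card_lcoset; apply/eqP.
rewrite -(eqn_pmul2r (cardG_gt0 (H :&: H :^ x)%G)) /= setIC -mul_cardG cardJg.
by rewrite -mulnA (mulnC #|H : _|) Lagrange // subsetIr.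
Qed.

Lemma dcoset_rcosetI x c :
  dcoset x :&: H :* c = if c \in dcoset x then H :* c else set0.
Proof.
case: ifP => [cD | /negP ncD]; first by apply/setIidPr; rewrite rcoset_sub_dcoset.
apply/setP=> y; rewrite !inE; apply/andP=> -[yD /rcoset_eqP eqHyc]; apply: ncD.
by rewrite -rcoset_sub_dcoset -eqHyc rcoset_sub_dcoset.
Qed.

Lemma dcosetV_rcoset_inv c w :
  w \in dcoset c^-1 -> exists2 g, g \in H :* c & g^-1 \in H :* w.
Proof.
case/dcosetP=> a [b [Ha Hb ->]]; exists (b^-1 * c); first by rewrite mem_rcoset mulgK groupV.
by rewrite mem_rcoset !invMg !invgK !mulgA mulgK mulVg mul1g groupV.
Qed.

End DoubleCosets.

Lemma set2I_set1 (T : finType) (a b : T) (B : {set T}) :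
  a \in B -> (b \in B -> b = a) -> [set a; b] :&: B = [set a].
Proof.
move=> aB bBa; apply/setP=> x; rewrite !inE.
apply/idP/idP => [/andP[/orP[// | /eqP -> /bBa ->]] | /eqP ->] //.
by rewrite eqxx aB.
Qed.

Lemma trivIset_block_eq (T : finType) (P : {set {set T}}) A B x :
  trivIset P -> A \in P -> B \in P -> x \in A -> x \in B -> A = B.
Proof. by move=> tP AP BP xA xB; rewrite -(def_pblock tP AP xA) (def_pblock tP BP xB). Qed.

Section InverseClosedTransversal.

Variable gT : finGroupType.
Implicit Types (U : {set {set gT}}) (C : {set gT}).

Definition inverse_pair_step (P : {set {set gT}} -> Prop) :=
  forall U, P U -> U != set0 -> exists C C' g,
    [/\ C \in U, C' \in U, g \in C, g^-1 \in C' & C = C' -> g^-1 = g]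
    /\ P (U :\: [set C; C']).

Lemma inverse_closed_transversal (P : {set {set gT}} -> Prop) U :
  inverse_pair_step P -> P U -> trivIset U ->
  exists S : {set gT}, [/\ S \subset cover U, {in S, forall s, s^-1 \in S}
                           & {in U, forall C, #|S :&: C| = 1%N}].
Proof.
move=> step; have [n] := ubnP #|U|; elim: n U => // n IH U ltUn PU tU.
have [-> | /(step U PU)[C [C' [g [[CU C'U gC giC' eqC] PU']]]]] := eqVneq U set0.
  by exists set0; split=> [|s|C]; rewrite ?sub0set ?inE.
set U' := U :\: [set C; C'].
have sU'U : U' \subset U by apply: subsetDl.
have ltU'n : #|U'| < n.
  rewrite -ltnS (leq_trans _ ltUn) // ltnS proper_card //.
  by apply/properP; split=> //; exists C; rewrite // !inE eqxx.
have [S' [sS'U' S'inv S'one]] := IH U' ltU'n PU' (trivIsetS sU'U tU).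
have blockE := trivIset_block_eq tU.
have coverU'U : cover U' \subset cover U.
  by apply/bigcupsP=> B /(subsetP sU'U) BU; apply: bigcup_sup.
exists (S' :|: [set g; g^-1]); split.
- rewrite subUset (subset_trans sS'U' coverU'U) subUset !sub1set /cover /=.
  by apply/andP; split; apply/bigcupP; [exists C | exists C'].
- move=> s; rewrite !inE => /orP[/S'inv -> // | /orP[] /eqP ->].
    by rewrite eqxx !orbT.
  by rewrite invgK eqxx !orbT.
move=> B BU; rewrite setIUl.
have [BCC' | nBCC'] := boolP (B \in [set C; C']).
  have -> : S' :&: B = set0.
    apply/setP=> x; rewrite !inE; apply/andP=> -[/(subsetP sS'U')/bigcupP[B2 B2U' xB2] xB].
    have B2B := blockE B2 B x (subsetP sU'U _ B2U') BU xB2 xB.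
    by move: B2U'; rewrite B2B inE BCC'.
  rewrite set0U; case/set2P: BCC' => ->.
    by rewrite set2I_set1 ?cards1 // => giC; apply: eqC; apply: blockE giC giC'.
  rewrite setUC set2I_set1 ?cards1 // => gC'.
  by rewrite (eqC (blockE _ _ g CU C'U gC gC')).
have BU' : B \in U' by rewrite inE nBCC'.
have -> : [set g; g^-1] :&: B = set0.
  apply/setP=> x; rewrite !inE andb_orl; apply/negbTE; rewrite negb_or.
  apply/andP; split; apply/andP=> -[/eqP -> xB]; case/negP: nBCC'; rewrite !inE.
    by rewrite (blockE B C g) ?eqxx.
  by rewrite (blockE B C' g^-1) ?eqxx ?orbT.
by rewrite setU0 S'one.
Qed.

End InverseClosedTransversal.

Lemma card_partitionI (T : finType) (P : {set {set T}}) (D A : {set T}) :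
  partition P D -> A \subset D -> #|A| = (\sum_(B in P) #|A :&: B|)%N.
Proof.
move=> partP sAD; have := @set_partition_big_cond _ _ _ addn _ _ (mem A) (fun=> 1%N) partP.
rewrite /= sum1dep_card.
have -> : [set x in D | x \in A] = A.
  by apply/setP=> x; rewrite inE andb_idl // => /(subsetP sAD).
move=> ->; apply: eq_bigr => B _; rewrite sum1dep_card.
by apply: eq_card => x; rewrite !inE andbC.
Qed.

Section PerfectCodeTransversal.

Variables (gT : finGroupType) (G H : {group gT}).
Hypothesis sHG : H \subset G.

Lemma partition_nontrivial_rcosets :
  partition (rcosets H G :\ (H : {set gT})) (G :\: H).
Proof.
apply: partitionD1 (rcosets_partition sHG) _.
by apply/rcosetsP; exists 1; rewrite ?group1 ?rcoset1.
Qed.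

Lemma nontrivial_rcosetP C :
  C \in rcosets H G :\ (H : {set gT}) -> exists2 c, c \in G :\: H & C = H :* c.
Proof.
rewrite inE => /andP[nCH /rcosetsP[c Gc defC]]; exists c => //.
by rewrite inE Gc andbT; apply: contraNN nCH => Hc; rewrite defC rcoset_id ?set11.
Qed.

Lemma mem_nontrivial_rcosets c :
  (H :* c \in rcosets H G :\ (H : {set gT})) = (c \in G :\: H).
Proof.
rewrite in_setD1 mem_rcosets (mulSGid sHG) inE; congr (~~ _ && _).
by apply/eqP/idP=> [<- | /rcoset_id //]; apply: rcoset_refl.
Qed.

Lemma card_cayley_nbhd (S : {set gT}) x :
  #|[set c in H | cayley_adj S x c]| = #|S :&: H :* x^-1|.
Proof.
rewrite -(card_rcoset _ x); apply: eq_card => y.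
by rewrite !inE /cayley_adj mem_rcoset inE mem_rcoset invgK mulgKV andbC.
Qed.

Lemma perfect_code_ofP :
  perfect_code_of G H <->
  exists S : {set gT}, [/\ S \subset G :\: H, {in S, forall s, s^-1 \in S}
                         & {in G :\: H, forall x, #|S :&: H :* x| = 1%N}].
Proof.
split=> [[S [[sS Sinv] [_ indepH nbhd1]]] | [S [sS Sinv S1]]]; exists S.
  split=> // [| x /setDP[Gx nHx]].
    apply/subsetP=> s Ss; rewrite inE (subsetP (subset_trans sS (subsetDl _ _))) //.
    rewrite andbT; apply: contraL Ss => Hs.
    by have := indepH 1 s (group1 H) Hs; rewrite /cayley_adj invg1 mulg1.
  by rewrite -[x]invgK -card_cayley_nbhd nbhd1 // inE groupV nHx groupV.
split; first by split=> //; rewrite (subset_trans sS) // setDS // sub1set group1.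
split=> // [x y Hx Hy | x].
  by apply/negP => /(subsetP sS); rewrite inE groupM ?groupV.
by rewrite card_cayley_nbhd !inE => /andP[nHx Gx]; rewrite S1 // inE !groupV nHx.
Qed.

End PerfectCodeTransversal.

Section Criterion.

Variables (gT : finGroupType) (G H : {group gT}).
Hypothesis sHG : H \subset G.

Let U0 := rcosets H G :\ (H : {set gT}).

Let partU0 : partition U0 (G :\: H) := partition_nontrivial_rcosets sHG.

Let ncosets (U : {set {set gT}}) z := (\sum_(C in U) (C \subset dcoset H z))%N.

Let involution_in z := [exists t in dcoset H z, t ^+ 2 == 1].

Lemma ncosets_setD1 (U : {set {set gT}}) C z :
  C \in U -> ncosets U z = ((C \subset dcoset H z) + ncosets (U :\ C) z)%N.
Proof. exact: big_setD1. Qed.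

Lemma ncosets_U0_in_H z : z \in H -> ncosets U0 z = 0%N.
Proof.
move=> Hz; apply: big1 => C /nontrivial_rcosetP[c /setDP[_ nHc] ->].
by rewrite rcoset_sub_dcoset dcoset_id // (negbTE nHc).
Qed.

Lemma ncosets_U0 z : z \in G :\: H -> (ncosets U0 z * #|H|)%N = #|dcoset H z|.
Proof.
case/setDP=> Gz nHz.
have sDGH : dcoset H z \subset G :\: H.
  apply/subsetP=> x xD; rewrite inE; apply/andP; split.
    by apply: contra nHz => Hx; rewrite -(dcoset_id Hx) (dcoset_eqP _ _ _ xD) dcoset_refl.
  by case/dcosetP: xD => a [b [Ha Hb ->]]; rewrite !groupM // (subsetP sHG).
rewrite (card_partitionI partU0 sDGH) big_distrl /=.
apply: eq_bigr => C /nontrivial_rcosetP[c _ ->].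
rewrite rcoset_sub_dcoset dcoset_rcosetI.
by case: (c \in _); rewrite ?mul1n ?card_rcoset ?cards0.
Qed.

Lemma ncosets_gt0 (U : {set {set gT}}) z :
  (0 < ncosets U z)%N -> exists2 C, C \in U & C \subset dcoset H z.
Proof. by rewrite lt0n sum_nat_eq0 => /forall_inPn[C CU]; rewrite eqb0 negbK; exists C. Qed.

(* Invariant of the greedy matching; U holds the cosets not yet matched. *)
Let invariant (U : {set {set gT}}) :=
  U \subset U0 /\
  {in G, forall z, ncosets U z = ncosets U z^-1
                   /\ (z^-1 \in dcoset H z -> ~~ involution_in z -> ~~ odd (ncosets U z))}.

Hypothesis sqr_coset_cond : forall u, u \in G :\: H -> u ^+ 2 \in H ->
  (exists2 h, h \in H & (h * u) ^+ 2 = 1) \/ ~~ odd #|H : H :&: H :^ u|.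

Lemma invariant_U0 : invariant U0.
Proof.
split=> // z Gz; have [Hz | nHz] := boolP (z \in H).
  by rewrite !ncosets_U0_in_H ?groupV.
have zGH : z \in G :\: H by rewrite inE nHz.
split.
  apply/eqP; rewrite -(eqn_pmul2r (cardG_gt0 H)) !ncosets_U0 ?dcosetV ?card_invg //.
  by rewrite inE groupV nHz groupV.
case/dcosetP=> a [b [Ha Hb defzV]] noinv; set u := b * z.
have uD : u \in dcoset H z by apply/dcosetP; exists b, 1; rewrite group1 mulg1.
have uGH : u \in G :\: H by rewrite inE groupMl // nHz groupM // (subsetP sHG).
have zb : z * b = a^-1 * z^-1 by rewrite defzV !mulgA mulVg mul1g.
have u2 : u ^+ 2 = b * a^-1.
  by rewrite expgS expg1 /u mulgA -(mulgA b z b) zb !mulgA mulgKV.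
have Du : dcoset H u = dcoset H z := dcoset_eqP _ _ _ uD.
have [|[h Hh hu2] | even_idx] := sqr_coset_cond uGH; first by rewrite u2 groupM ?groupV.
  case/negP: noinv; apply/existsP; exists (h * u); rewrite hu2 eqxx andbT -Du.
  by apply/dcosetP; exists h, 1; rewrite group1 mulg1.
suff -> : ncosets U0 z = #|H : H :&: H :^ u| by [].
by apply/eqP; rewrite -(eqn_pmul2r (cardG_gt0 H)) ncosets_U0 // -Du card_dcoset mulnC.
Qed.

Lemma invariant_step_involution U c t :
    invariant U -> H :* c \in U -> t \in dcoset H c -> t ^+ 2 = 1 ->
  exists2 g, g \in H :* c & g^-1 = g /\ invariant (U :\ H :* c).
Proof.
move=> [sU0 invU] cU tD t2; have Dct := dcoset_eqP _ _ _ tD.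
case/dcosetP: tD => a [b [Ha Hb deft]].
have tV : t^-1 = t by rewrite -[t^-1]mulg1 -t2 expgS expg1 mulKg.
exists (t ^ b^-1).
  by rewrite mem_rcoset deft conjgE invgK !mulgA !mulgK groupM.
split; first by rewrite -conjVg tV.
split=> [|z Gz]; first exact: subset_trans (subsetDl _ _) sU0.
have [eq_zV par_z] := invU z Gz.
have DcV : dcoset H c^-1 = dcoset H c by rewrite dcosetV -Dct -dcosetV tV.
have cDzV : (c \in dcoset H z^-1) = (c \in dcoset H z).
  by rewrite mem_dcosetV !mem_dcoset DcV.
rewrite !(ncosets_setD1 _ cU) !rcoset_sub_dcoset cDzV in eq_zV par_z.
split=> [|zVD noinv]; first exact: addnI eq_zV.
have /negbTE cDz : c \notin dcoset H z.
  apply: contra noinv => /dcoset_eqP Dcz; apply/existsP; exists t.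
  by rewrite t2 eqxx andbT -Dcz -Dct dcoset_refl.
by move: (par_z zVD noinv); rewrite cDz.
Qed.

Lemma invariant_partner U c :
    invariant U -> H :* c \in U -> ~~ involution_in c ->
  exists2 w, H :* w \in U :\ H :* c & w \in dcoset H c^-1.
Proof.
move=> [sU0 invU] cU noinv; have /setDP[Gc _] : c \in G :\: H.
  by rewrite -(mem_nontrivial_rcosets sHG) (subsetP sU0).
have [eq_c par_c] := invU c Gc.
have [cVD | ncVD] := boolP (c^-1 \in dcoset H c).
  have /ncosets_gt0[C CU' CD] : (0 < ncosets (U :\ H :* c) c)%N.
    move: (par_c cVD noinv); rewrite (ncosets_setD1 _ cU) rcoset_sub_dcoset dcoset_refl.
    by case: (ncosets _ _).
  have [w _ defC] := nontrivial_rcosetP (subsetP sU0 C (subsetP (subsetDl _ _) C CU')).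
  exists w; first by rewrite -defC.
  by rewrite (dcoset_eqP _ _ _ cVD) -rcoset_sub_dcoset -defC.
have /ncosets_gt0[C CU] : (0 < ncosets U c^-1)%N.
  by rewrite -eq_c (ncosets_setD1 _ cU) rcoset_sub_dcoset dcoset_refl.
have [w _ defC] := nontrivial_rcosetP (subsetP sU0 C CU).
rewrite defC rcoset_sub_dcoset => wDcV; exists w => //.
rewrite in_setD1 -defC CU andbT; apply: contraNneq ncVD => eqC.
by rewrite -mem_dcosetV -rcoset_sub_dcoset -eqC defC rcoset_sub_dcoset.
Qed.

Lemma invariant_step_pair U c w :
    invariant U -> H :* c \in U -> H :* w \in U :\ H :* c -> w \in dcoset H c^-1 ->
  invariant (U :\: [set H :* c; H :* w]).
Proof.
move=> [sU0 invU] cU wU' wDcV; rewrite -setDDl.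
split=> [|z Gz]; first exact: subset_trans (subsetDl _ _) (subset_trans (subsetDl _ _) sU0).
have Dw : dcoset H w = dcoset H c^-1 := dcoset_eqP _ _ _ wDcV.
have cDzV : (c \in dcoset H z^-1) = (w \in dcoset H z) by rewrite mem_dcosetV !mem_dcoset Dw.
have wDzV : (w \in dcoset H z^-1) = (c \in dcoset H z).
  by rewrite mem_dcosetV !mem_dcoset dcosetV Dw -dcosetV invgK.
have [eq_zV par_z] := invU z Gz.
rewrite !(ncosets_setD1 _ cU) !(ncosets_setD1 _ wU') !rcoset_sub_dcoset in eq_zV par_z.
rewrite cDzV wDzV in eq_zV.
split=> [|zVD noinv]; first by move: eq_zV; rewrite addnCA => /addnI/addnI.
have wDz : (w \in dcoset H z) = (c \in dcoset H z) by rewrite -wDzV (dcoset_eqP _ _ _ zVD).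
by move: (par_z zVD noinv); rewrite wDz addnA addnn oddD odd_double.
Qed.

Lemma invariant_pair_step : inverse_pair_step invariant.
Proof.
move=> U invU /set0Pn[C CU].
have [c _ defC] := nontrivial_rcosetP (subsetP invU.1 C CU); subst C.
have [/existsP[t /andP[tD /eqP t2]] | noinv] := boolP (involution_in c).
  have [g gc [gV invU']] := invariant_step_involution invU CU tD t2.
  by exists (H :* c), (H :* c), g; rewrite setUid gV.
have [w wU' wDcV] := invariant_partner invU CU noinv.
have [g gc gVw] := dcosetV_rcoset_inv wDcV.
exists (H :* c), (H :* w), g; split; last exact: invariant_step_pair.
split=> //; first by case/setD1P: wU'.
by move=> eqcw; move: wU'; rewrite -eqcw setD11.
Qed.

Theorem perfect_code_criterion : perfect_code_of G H.
Proof.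
apply/(perfect_code_ofP sHG).
have [S [sSU0 Sinv S1]] := inverse_closed_transversal invariant_pair_step invariant_U0
  (partition_trivIset partU0).
exists S; split=> // [|x xGH]; first by rewrite -(cover_partition partU0).
by rewrite S1 // (mem_nontrivial_rcosets sHG).
Qed.

End Criterion.

Lemma logn2_odd_index (gT : finGroupType) (G H : {group gT}) :
  H \subset G -> odd #|G : H| -> logn 2 #|H| = logn 2 #|G|.
Proof.
move=> sHG oddGH; rewrite -(Lagrange sHG) lognM ?cardG_gt0 ?indexg_gt0 //.
by rewrite [logn 2 #|G : H|]logn_coprime ?addn0 // coprime2n.
Qed.

Lemma card_join_cycle_sqr (gT : finGroupType) (K : {group gT}) u :
  u \in 'N(K) -> u \notin K -> u ^+ 2 \in K -> #|K <*> <[u]>| = (2 * #|K|)%N.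
Proof.
move=> nKu nKu' u2K; have nKU : <[u]> \subset 'N(K) by rewrite cycle_subG.
rewrite -(Lagrange (joing_subl K <[u]>)) mulnC -card_quotient ?join_subG ?normG //.
rewrite quotientYidl // quotient_cycle //; congr (_ * _)%N; apply/eqP.
rewrite eqn_leq order_inf ?order_gt1 /=; last by rewrite -morphX //= coset_id.
by apply: contra nKu' => /eqP; apply: coset_idr.
Qed.

Lemma even_card_inv_closed (gT : finGroupType) (S : {set gT}) :
  {in S, forall s, s^-1 \in S} -> {in S, forall s, s^-1 != s} -> ~~ odd #|S|.
Proof.
(* A picks one element of each pair {s, s^-1} of S. *)
move=> Sinv Sfree; pose A := [set s in S | enum_rank s < enum_rank s^-1].
have defS : S = A :|: A^-1.
  apply/setP=> s; rewrite !inE invgK; apply/idP/orP=> [Ss | [] /andP[] //].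
    rewrite Ss Sinv //=; case: ltngtP; [by left | by right |].
    by move/val_inj/enum_rank_inj/esym/eqP; rewrite (negbTE (Sfree s Ss)).
  by move/Sinv; rewrite invgK.
have tiA : A :&: A^-1 = set0.
  apply/setP=> s; rewrite !inE invgK; apply/negbTE; apply/negP.
  by case/andP=> /andP[_ lt1] /andP[_]; rewrite ltnNge (ltnW lt1).
have := cardsUI A A^-1; rewrite tiA cards0 addn0 card_invg -defS addnn => ->.
by rewrite odd_double.
Qed.

Section PerfectCodeCriteria.

Variables (gT : finGroupType) (G H : {group gT}).
Hypothesis sHG : H \subset G.

Lemma perfect_code_of_2part_sqr1 :
  {in G :\: H, forall u, u ^+ 2 \in H -> u.`_2 ^+ 2 = 1} -> perfect_code_of G H.
Proof.
move=> sqr1; apply: perfect_code_criterion => // u uGH u2H; left.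
set v := u.`_2^'; have co_v2 : coprime #|<[v]>| 2.
  by rewrite coprimen2 odd_2'nat; apply: p_elt_constt.
(* v has odd order, so it is a power of v ^+ 2 = (u ^+ 2).`_2^', which lies in H. *)
have Hv : v \in H.
  rewrite -(expgK co_v2 (cycle_id v)) groupX // /v -consttX.
  by rewrite (subsetP _ _ (cycle_constt _ _)) // cycle_subG.
have cuv : commute u.`_2 v.
  exact: (centsP (cycle_abelian u)) _ (cycle_constt _ _) _ (cycle_constt _ _).
exists v^-1; rewrite ?groupV //.
by rewrite -{1}(consttC 2 u) -/v cuv mulKg sqr1.
Qed.

Lemma perfect_code_of_odd : odd #|H| -> perfect_code_of G H.
Proof.
move=> oddH; apply: perfect_code_of_2part_sqr1 => u _ u2H.
rewrite -consttX; apply/constt1P; apply: pnat_dvd (order_dvdG u2H) _.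
by rewrite -odd_2'nat.
Qed.

Lemma perfect_code_of_2elt_sqr1 :
  {in G, forall y, 2.-elt y -> y ^+ 2 = 1} -> perfect_code_of G H.
Proof.
move=> sqr1; apply: perfect_code_of_2part_sqr1 => u /setDP[Gu _] _.
by apply: sqr1; [rewrite (subsetP _ _ (cycle_constt _ _)) ?cycle_subG | apply: p_elt_constt].
Qed.

Lemma perfect_code_of_Sylow2 : logn 2 #|H| = logn 2 #|G| -> perfect_code_of G H.
Proof.
move=> logHG; apply: perfect_code_criterion => // u /setDP[Gu nHu] u2H; right.
apply/negP=> oddHK; set K := (H :&: H :^ u)%G.
have nKu : u \in 'N(K).
  by apply/normP; rewrite /= conjIg -conjsgM (conjGid (u2H : u * u \in H)) setIC.
have u2K : u ^+ 2 \in K by rewrite inE u2H mem_conjg conjXg conjgE invgK mulgV mulg1.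
have nKu' : u \notin K by apply: contra nHu; apply: subsetP; apply: subsetIl.
have sKuG : K <*> <[u]> \subset G.
  by rewrite join_subG cycle_subG Gu andbT (subset_trans (subsetIl _ _)).
have := dvdn_leq_log 2 (cardG_gt0 G) (cardSg sKuG).
rewrite card_join_cycle_sqr // lognM ?cardG_gt0 // -logHG.
by rewrite (logn2_odd_index (subsetIl _ _) oddHK) logn_prime // ltnn.
Qed.

Lemma perfect_code_odd_index :
  {in G, forall g, g ^+ 2 = 1 -> g \in H} -> perfect_code_of G H -> odd #|G : H|.
Proof.
move=> invH /(perfect_code_ofP sHG)[S [sS Sinv S1]].
have Sfree : {in S, forall s, s^-1 != s}.
  move=> s /(subsetP sS)/setDP[Gs nHs]; apply: contra nHs => /eqP sV.
  by apply: invH => //; rewrite expgS expg1 -{1}sV mulVg.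
have partU0 := partition_nontrivial_rcosets sHG.
have cardS : #|S| = #|rcosets H G :\ (H : {set gT})|.
  rewrite (card_partitionI partU0 sS) -sum1_card; apply: eq_bigr => C.
  by case/nontrivial_rcosetP=> x xGH ->; rewrite S1.
rewrite /indexg (cardsD1 (H : {set gT})) -cardS.
rewrite (_ : _ \in _) ?oddS ?(even_card_inv_closed Sinv Sfree) //.
by apply/rcosetsP; exists 1; rewrite ?group1 ?rcoset1.
Qed.

End PerfectCodeCriteria.

Section Mx2.

Local Open Scope ring_scope.

Lemma mx2_cayley_hamilton (R : comNzRingType) (A : 'M[R]_2) :
  A ^+ 2 = \tr A *: A - (\det A)%:M.
Proof.
have := Cayley_Hamilton A.
rewrite -[char_poly A]coefK size_char_poly poly_def rmorph_sum /=.
rewrite !big_ord_recr big_ord0 /= add0r !linearZ /= !rmorphXn /= horner_mx_X.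
rewrite char_poly_det (char_poly_trace A isT).
have /monicP := char_poly_monic A; rewrite lead_coefE size_char_poly => ->.
rewrite expr0 expr1 scale1r sqrrN expr1n mul1r.
move/eqP; rewrite addrAC addr_eq0 scaleNr opprK => /eqP <-.
by rewrite -scalemx1 addrAC subrr add0r.
Qed.

Variable F : fieldType.
Implicit Types A N : 'M[F]_2.

Lemma mx2_sqr_eq1_det1 A :
  2%:R != 0 :> F -> A ^+ 2 = 1 -> \det A = 1 -> A = 1 \/ A = -1.
Proof.
move=> two_neq0 A2 detA.
have trA : \tr A *: A = 2%:R%:M.
  have := mx2_cayley_hamilton A; rewrite A2 detA => /eqP; rewrite eq_sym subr_eq => /eqP ->.
  by rewrite -[2%:R]/(1 + 1 : F) raddfD.
have [tr0 | tr_neq0] := eqVneq (\tr A) 0.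
  move: trA; rewrite tr0 scale0r => /matrixP/(_ 0 0); rewrite !mxE /= mulr1n => /esym/eqP.
  by rewrite (negbTE two_neq0).
set a := (\tr A)^-1 * 2%:R.
have defA : A = a%:M by rewrite -scale_scalar_mx -trA scalerA mulVf // scale1r.
have /eqP : a ^+ 2 = 1.
  by move: A2; rewrite defA -rmorphXn /= => /matrixP/(_ 0 0); rewrite !mxE /= !mulr1n.
by rewrite sqrf_eq1 => /orP[] /eqP a1; [left | right]; rewrite defA a1 ?raddfN.
Qed.

Lemma mx2_nilpotent N m : N ^+ m = 0 -> N ^+ 2 = 0.
Proof.
case: m => [/eqP|m Nm]; first by rewrite expr0 oner_eq0.
have /eqP detN : \det N == 0.
  have : N \isn't a GRing.unit by apply/negP => /(unitrX m.+1); rewrite Nm unitr0.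
  by rewrite unitmxE unitfE negbK.
have N2 : N ^+ 2 = \tr N *: N by rewrite mx2_cayley_hamilton detN raddf0 subr0.
have NX k : N ^+ k.+1 = \tr N ^+ k *: N.
  elim: k => [|k IHk]; first by rewrite expr1 expr0 scale1r.
  by rewrite exprS IHk -scalerAr -expr2 N2 scalerA -exprSr.
move: Nm; rewrite NX => /eqP; rewrite scaler_eq0 expf_eq0 => /orP[/andP[_ /eqP tr0] | /eqP N0].
  by rewrite N2 tr0 scale0r.
by rewrite N2 N0 scaler0.
Qed.

Lemma mx2_pchar2_sqr_eq1 A k : 2%N \in [pchar F] -> A ^+ (2 ^ k) = 1 -> A ^+ 2 = 1.
Proof.
move=> pchar2 Ak; have pchar2M : 2%N \in [pchar 'M[F]_2] by rewrite pchar_lalg.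
have frobA j : (A + 1) ^+ (2 ^ j) = A ^+ (2 ^ j) + 1.
  elim: j => // j IHj; rewrite expnSr !exprM IHj -!(pFrobenius_autE pchar2M).
  by rewrite pFrobenius_autD_comm ?pFrobenius_aut1 //; apply: commr1.
have /mx2_nilpotent : (A + 1) ^+ (2 ^ k) = 0 by rewrite frobA Ak addrr_pchar2.
by rewrite (frobA 1) => /eqP; rewrite addr_eq0 (oppr_pchar2 pchar2M) => /eqP.
Qed.

End Mx2.

Section SL2.

Variable F : finFieldType.

Lemma SL2_group_set : group_set (SL2 F).
Proof.
apply/group_setP; split=> [|x y]; first by rewrite inE GL_1E det1.
by rewrite !inE GL_ME detM => /eqP-> /eqP->; rewrite mulr1.
Qed.

Canonical SL2_group := group SL2_group_set.

Lemma pchar2_finField : (2%N \in [pchar F])%R = ~~ odd #|F|.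
Proof.
have [p p_pr pcharFp] := finPcharP F.
have p_natF : p.-nat #|F|.
  by have := abelem_pgroup (fin_ring_pchar_abelem pcharFp); rewrite /pgroup cardsT.
apply/idP/idP=> [pcharF2 | evenF].
  have p2 : p = 2 by apply/esym/eqP; move: pcharF2; rewrite (pcharf_eq pcharFp).
  apply/negP; rewrite odd_2'nat -p2 => /(pnat_1 p_natF) F1.
  by have := finNzRing_gt1 F; rewrite F1.
have : p.-nat 2 by apply: pnat_dvd p_natF; rewrite dvdn2.
by rewrite pnatE // => /eqP ->.
Qed.

Lemma GL2_2elt_sqr1 (y : {'GL_2[F]}) : (2%N \in [pchar F])%R -> 2.-elt y -> y ^+ 2 = 1.
Proof.
move=> pchar2 /p_natP[k ord_y]; apply: val_inj.
rewrite FinRing.val_unitX (mx2_pchar2_sqr_eq1 (k := k)) //.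
by rewrite -FinRing.val_unitX -ord_y expg_order.
Qed.

Lemma SL2_involution (g : {'GL_2[F]}) :
  odd #|F| -> g \in SL2 F -> g ^+ 2 = 1 -> g != 1 -> GLval g = (-1)%R.
Proof.
move=> oddF; rewrite inE => /eqP detg g2 g_neq1.
have two_neq0 : (2%:R != 0 :> F)%R by move: oddF; rewrite -[odd _]negbK -pchar2_finField inE.
have gval2 : (GLval g ^+ 2 = 1)%R by rewrite -FinRing.val_unitX g2.
have [g1 | //] := mx2_sqr_eq1_det1 two_neq0 gval2 detg.
by case/eqP: g_neq1; apply: val_inj.
Qed.

Lemma SL2_involutions_sub (H : {group {'GL_2[F]}}) :
    odd #|F| -> H \subset SL2 F -> ~~ odd #|H| ->
  {in SL2 F, forall g, g ^+ 2 = 1 -> g \in H}.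
Proof.
move=> oddF sH evenH g Gg g2; have [-> | g_neq1] := eqVneq g 1; first exact: group1.
have [x Hx ord_x] : {x | x \in H & #[x] = 2%N} by apply: Cauchy; rewrite ?dvdn2.
have x2 : x ^+ 2 = 1 by apply/eqP; rewrite -order_dvdn ord_x.
have x_neq1 : x != 1 by rewrite -order_eq1 ord_x.
suff -> : g = x by [].
by apply: val_inj; change (GLval g = GLval x); rewrite !SL2_involution // (subsetP sH).
Qed.

End SL2.

Theorem lemma4p6 (F : finFieldType) :
  (~~ odd #|F| ->
     forall H : {group {'GL_2[F]}}, H \subset SL2 F -> perfect_code_of (SL2 F) H)
  /\
  (odd #|F| ->
     forall H : {group {'GL_2[F]}}, H \subset SL2 F ->
       perfect_code_of (SL2 F) H <->
       (partn #|H| 2 = 1%N \/ partn #|H| 2 = partn #|SL2 F| 2)).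
Proof.
split=> [evenF H sH | oddF H sH].
  apply: perfect_code_of_2elt_sqr1 sH _ => y _; apply: GL2_2elt_sqr1.
  by rewrite pchar2_finField.
split=> [pcH | [H2_1 | H2_eq]].
- have [oddH | evenH] := boolP (odd #|H|).
    by left; apply/eqP; rewrite partn_eq1 // -odd_2'nat.
  right; rewrite !p_part; congr (2 ^ _)%N.
  apply: (logn2_odd_index sH); apply: (perfect_code_odd_index sH) pcH.
  exact: SL2_involutions_sub.
- by apply: (perfect_code_of_odd sH); move/eqP: H2_1; rewrite partn_eq1 // -odd_2'nat.
- apply: (perfect_code_of_Sylow2 sH); apply/eqP.
  by rewrite -(eqn_exp2l _ _ (ltnSn 1)) -!p_part H2_eq.
Qed.
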